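(* Let $\{X_n\}_{n\in\mathbb N}$ be a sequence of finite metric spaces with $|X_n|\to\infty$ as $n\to\infty$. Let $X=\bigsqcup_{n\in\mathbb N}X_n$ be a coarse disjoint union, and let $P_X$ be the averaging projection of the sequence $\{X_n\}_{n\in\mathbb N}$. Then $P_X$ is quasi-local if and only if $$0=\lim_{R\to+\infty}\sup\left\{\frac{|A||B|}{|X_n|^2}:\ n\in\mathbb N,\ A,B\subseteq X_n,\ d(A,B)\geq R\right\}.$$
   Context: A coarse disjoint union of finite metric spaces $(X_n,d_n)$ is the set $X=\bigsqcup_n X_n$ with a metric $d$ that restricts to $d_n$ on each $X_n$ and satisfies $d(X_n,X_m)\to\infty$ as $n+m\to\infty$ with $m\neq n$. For a finite subset $F$ of a set $Y$, $P_F\in\mathfrak B(\ell^2(Y))$ is the orthogonal projection onto the span of $\chi_F$, i.e. $(P_F)_{x,y}=1/|F|$ if $x,y\in F$ and $0$ otherwise. The averaging projection of the sequence is $P_X=\sum_n P_{X_n}$ (strong operator topology sum) on $\ell^2(X)$. For $A\subseteq X$, $\chi_A$ also denotes the multiplication operator by the characteristic function of $A$. An operator $T\in\mathfrak B(\ell^2(X))$ has $(R,\varepsilon)$-propagation if $\|\chi_AT\chi_B\|\leq\varepsilon$ for all $A,B\subseteq X$ with $d(A,B)\geq R$; $T$ is quasi-local if for every $\varepsilon>0$ there is $R>0$ such that $T$ has $(R,\varepsilon)$-propagation. $|A|$ denotes cardinality. *)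

From HB Require Import structures.
From mathcomp Require Import all_boot all_order all_algebra.
From mathcomp Require Import all_classical all_reals all_analysis.
From mathcomp Require Import complex.
Set Implicit Arguments. Unset Strict Implicit. Unset Printing Implicit Defensive.
Import Order.TTheory GRing.Theory Num.Theory numFieldNormedType.Exports.
Local Open Scope classical_set_scope.
Local Open Scope ring_scope.

Definition cdu (T : nat -> finType) : Type := {n : nat & T n}.
HB.instance Definition _ (T : nat -> finType) := Choice.on (cdu T).

Definition inX (T : nat -> finType) (n : nat) (x : T n) : cdu T := existT _ n x.

Definition is_metric (R : realType) (Y : Type) (d : Y -> Y -> R) : Prop :=
  (forall x y, 0 <= d x y) /\ (forall x y, d x y = 0 <-> x = y) /\
  (forall x y, d x y = d y x) /\ (forall x y z, d x z <= d x y + d y z).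

(* d is a metric on X restricting to the metrics of the X_n (which are the
   restrictions of d), with d(X_n, X_m) -> oo as n + m -> oo, m <> n. *)
Definition coarse_disjoint_union (R : realType) (T : nat -> finType)
  (d : cdu T -> cdu T -> R) : Prop :=
  is_metric d /\
  forall K : R, exists N : nat, forall n m : nat, n <> m -> (N <= n + m)%N ->
    forall (x : T n) (y : T m), K <= d (inX x) (inX y).

Definition card_to_infty (T : nat -> finType) : Prop :=
  forall K : nat, exists N : nat, forall n, (N <= n)%N -> (K <= #|T n|)%N.

Definition msq (R : realType) (z : R[i]) : R := complex.Re z ^+ 2 + complex.Im z ^+ 2.

Definition l2norm (R : realType) (X : choiceType) (f : X -> R[i]) : \bar R :=
  sqrte (\esum_(x in [set: X]) (msq (f x))%:E).

Definition opnorm (R : realType) (X : choiceType)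
  (Top : (X -> R[i]) -> (X -> R[i])) : \bar R :=
  ereal_sup [set l2norm (Top f) | f in [set f | (l2norm f <= 1)%E]].

Definition chi (R : realType) (X : Type) (A : set X) (f : X -> R[i]) : X -> R[i] :=
  fun x => if `[< A x >] then f x else 0.

(* d(A, B) >= r, with d(A, B) = inf { d a b | a in A, b in B } (= +oo if empty) *)
Definition dist_ge (R : realType) (X : Type) (d : X -> X -> R) (A B : set X) (r : R) :=
  forall a b, A a -> B b -> r <= d a b.

Definition has_propagation (R : realType) (X : choiceType) (d : X -> X -> R)
  (Top : (X -> R[i]) -> (X -> R[i])) (r eps : R) : Prop :=
  forall A B : set X, dist_ge d A B r ->
    (opnorm (fun f => chi A (Top (chi B f))) <= eps%:E)%E.

Definition quasi_local (R : realType) (X : choiceType) (d : X -> X -> R)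
  (Top : (X -> R[i]) -> (X -> R[i])) : Prop :=
  forall eps : R, 0 < eps -> exists r : R, 0 < r /\ has_propagation d Top r eps.

(* The averaging projection P_X = sum_n P_{X_n} (SOT), written out pointwise:
   (P_X f)(x) = |X_n|^-1 * sum_{y in X_n} f y  for x in X_n. *)
Definition avg_proj (R : realType) (T : nat -> finType)
  (f : cdu T -> R[i]) : cdu T -> R[i] :=
  fun x => (#|T (projT1 x)|%:R)^-1 * \sum_(y : T (projT1 x)) f (inX y).

Definition ratio_set (R : realType) (T : nat -> finType)
  (d : cdu T -> cdu T -> R) (r : R) : set R :=
  [set q | exists (n : nat) (A B : {set T n}),
     dist_ge d [set inX a | a in [set a | a \in A]] [set inX b | b in [set b | b \in B]] r /\
     q = (#|A| * #|B|)%:R / (#|T n| ^ 2)%:R].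

From HB Require Import structures.
From mathcomp Require Import all_boot all_order all_algebra ring lra.
From mathcomp Require Import all_classical all_reals all_analysis.
From mathcomp Require Import complex.
Set Implicit Arguments. Unset Strict Implicit. Unset Printing Implicit Defensive.
Import Order.TTheory GRing.Theory Num.Theory numFieldNormedType.Exports.
Local Open Scope classical_set_scope.
Local Open Scope ring_scope.
Local Open Scope complex_scope.

(* On the fibre X_n the operator χ_A P_X χ_B sends f to the constant
   |X_n|^-1 Σ_{B ∩ X_n} f on A ∩ X_n.  By Cauchy–Schwarz its squared norm there
   is at most |A ∩ X_n| |B ∩ X_n| / |X_n|^2 times the squared norm of f on X_n,
   and the normalised indicator of B shows that this ratio is attained.  Summing
   over the fibres, P_X has (R, ε)-propagation exactly when the supremum of the
   ratios at distance R is at most ε^2, which turns quasi-locality into the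
   stated limit. *)

Lemma sqr_sum_le_card_sum_sqr (R : realFieldType) (I : finType) (P : pred I)
    (x : I -> R) :
  (\sum_(i | P i) x i) ^+ 2 <= #|P|%:R * \sum_(i | P i) x i ^+ 2.
Proof.
set S1 := \sum_(i | P i) x i; set S2 := \sum_(i | P i) x i ^+ 2.
have : 0 <= \sum_(i | P i) \sum_(j | P j) (x i - x j) ^+ 2.
  by do 2![apply: sumr_ge0 => ? _]; exact: sqr_ge0.
have -> : \sum_(i | P i) \sum_(j | P j) (x i - x j) ^+ 2 =
    \sum_(i | P i) (x i ^+ 2 *+ #|P| - (x i * S1) *+ 2 + S2).
  apply: eq_bigr => i _; under eq_bigr do rewrite sqrrB.
  by rewrite big_split /= sumrB sumrMnl sumr_const -mulr_sumr.
rewrite big_split /= sumrB !sumrMnl sumr_const -mulr_suml -/S1 -/S2.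
rewrite -[S2 *+ _]mulr_natr -[_ *+ 2]mulr_natr expr2 [_%:R * _]mulrC.
move: (S2 * _) (S1 * S1) => a b; lra.
Qed.

Lemma ler_sqrt_sqr (R : rcfType) (a b : R) :
  0 <= b -> (Num.sqrt a <= b) = (a <= b ^+ 2).
Proof. by move=> b0; rewrite -{1}(ger0_norm b0) -sqrtr_sqr ler_sqrt ?sqr_ge0. Qed.

Section SquaredModulus.
Variable R : realType.

Lemma msq_ge0 (z : R[i]) : 0 <= msq z.
Proof. by rewrite addr_ge0 ?sqr_ge0. Qed.

Lemma msq0 : msq (0 : R[i]) = 0.
Proof. by rewrite /msq expr0n addr0. Qed.

Lemma msq_real (c : R) : msq c%:C = c ^+ 2.
Proof. by rewrite /msq /= expr0n addr0. Qed.

Lemma msqZ (c : R) (z : R[i]) : msq (c%:C * z) = c ^+ 2 * msq z.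
Proof. by case: z => a b; rewrite /msq /=; ring. Qed.

Lemma msq_sum_le (I : finType) (P : pred I) (F : I -> R[i]) :
  msq (\sum_(i | P i) F i) <= #|P|%:R * \sum_(i | P i) msq (F i).
Proof.
rewrite /msq (raddf_sum (@complex.Re R)) (raddf_sum (@complex.Im R)).
by rewrite big_split mulrDr lerD ?sqr_sum_le_card_sum_sqr.
Qed.
End SquaredModulus.

Section DisjointUnion.
Variable T : nat -> finType.

Lemma inX_inj n : injective (@inX T n).
Proof. by move=> x y; apply: Eqdep_dec.inj_pair2_eq_dec => a b; exact: decP eqP. Qed.

Definition lift_set n (A : {set T n}) : set (cdu T) :=
  [set inX a | a in [set a | a \in A]].

Definition fiber_set (A : set (cdu T)) n : {set T n} :=
  [set x | `[< A (inX x) >]].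

Lemma lift_setP n (A : {set T n}) (x : T n) : lift_set A (inX x) <-> x \in A.
Proof. by split=> [[y Ay /inX_inj <-]|Ax]; last exists x. Qed.

Lemma lift_setK n (A : {set T n}) : fiber_set (lift_set A) n = A.
Proof. by apply/setP => x; rewrite inE; apply/asboolP/idP => /lift_setP. Qed.

Lemma lift_set_fiber n (A : {set T n}) m (y : T m) : lift_set A (inX y) -> m = n.
Proof. by case=> x _ /(congr1 (@projT1 _ _)). Qed.

Lemma lift_fiber_set_sub (A : set (cdu T)) n : lift_set (fiber_set A n) `<=` A.
Proof. by move=> _ [x + <-]; rewrite /= inE => /asboolP. Qed.

Variable R : realType.

Lemma chi_inX (A : set (cdu T)) (h : cdu T -> R[i]) n (x : T n) :
  chi A h (inX x) = if x \in fiber_set A n then h (inX x) else 0.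
Proof. by rewrite /chi inE. Qed.

Lemma chi_lift_set_out n (A : {set T n}) (h : cdu T -> R[i]) m (y : T m) :
  m <> n -> chi (lift_set A) h (inX y) = 0.
Proof. by move=> mn; rewrite /chi; case: asboolP => // /lift_set_fiber. Qed.

Lemma sum_msq_chi (A : set (cdu T)) (h : cdu T -> R[i]) n :
  \sum_(x : T n) msq (chi A h (inX x)) = \sum_(x in fiber_set A n) msq (h (inX x)).
Proof.
rewrite [RHS]big_mkcond; apply: eq_bigr => x _.
by rewrite chi_inX; case: ifP; rewrite ?msq0.
Qed.

Lemma avg_proj_inX (h : cdu T -> R[i]) n (x : T n) :
  avg_proj h (inX x) = (#|T n|%:R^-1)%:C * \sum_(y : T n) h (inX y).
Proof. by rewrite /avg_proj /= fmorphV rmorph_nat. Qed.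

Lemma sum_chi (A : set (cdu T)) (h : cdu T -> R[i]) n :
  \sum_(y : T n) chi A h (inX y) = \sum_(y in fiber_set A n) h (inX y).
Proof. by rewrite [RHS]big_mkcond; apply: eq_bigr => y _; rewrite chi_inX. Qed.

Lemma fsbig_setT_fin (U : finType) (F : U -> \bar R) :
  (\sum_(x \in [set: U]) F x = \sum_(x : U) F x)%E.
Proof.
have -> : [set: U] = [set` index_enum U].
  by apply/seteqP; split=> x //= _; rewrite mem_index_enum.
by rewrite -fsbig_seq ?index_enum_uniq.
Qed.

Lemma esum_cdu (g : cdu T -> \bar R) : (forall x, 0 <= g x)%E ->
  \esum_(x in [set: cdu T]) g x = \esum_(n in [set: nat]) \sum_(y : T n) g (inX y).
Proof.
move=> g0; pose J n := [set inX y | y in [set: T n]].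
have -> : [set: cdu T] = \bigcup_(n in [set: nat]) J n.
  by apply/seteqP; split=> // -[n y] _; exists n => //; exists y.
rewrite esum_bigcupT //; last first.
  by move=> n m _ _ [_ [[y _ <-] [z _ /(congr1 (@projT1 _ _))]]].
apply: eq_esum => n _; rewrite esum_image; last by move=> x y _ _ /inX_inj.
by rewrite esum_fset ?fsbig_setT_fin //; exact: finite_finset.
Qed.

Lemma l2norm_chi_lift_set n (A : {set T n}) (h : cdu T -> R[i]) :
  l2norm (chi (lift_set A) h) =
  sqrte (\sum_(x : T n) msq (chi (lift_set A) h (inX x)))%:E.
Proof.
have msq_ge0E x : (0 <= (msq (chi (lift_set A) h x))%:E)%E by rewrite lee_fin msq_ge0.
pose F m := (\sum_(x : T m) (msq (chi (lift_set A) h (inX x)))%:E)%E.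
rewrite /l2norm esum_cdu //.
rewrite (eq_esum (b := fun m => if m \in [set n] then F m else 0%E)).
  by rewrite -esum_mkcond esum_set1 ?sume_ge0 // /F sumEFin.
move=> m _; case: ifPn => // /negP; rewrite inE => mn.
by rewrite big1 // => y _; rewrite chi_lift_set_out ?msq0.
Qed.

End DisjointUnion.

Section Propagation.
Variables (R : realType) (X : choiceType) (d : X -> X -> R).

Lemma dist_geS (A A' B B' : set X) r :
  A' `<=` A -> B' `<=` B -> dist_ge d A B r -> dist_ge d A' B' r.
Proof. by move=> AA' BB' dAB a b /AA' Aa /BB' Bb; exact: dAB. Qed.

Lemma dist_ge_le (A B : set X) r r' : r' <= r -> dist_ge d A B r -> dist_ge d A B r'.
Proof. by move=> r'r dAB a b Aa Bb; apply: le_trans r'r (dAB a b Aa Bb). Qed.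

Lemma has_propagation_le Top r r' eps :
  r <= r' -> has_propagation d Top r eps -> has_propagation d Top r' eps.
Proof. by move=> rr' Hr A B /(dist_ge_le rr'); exact: Hr. Qed.

End Propagation.

Section AveragingProjection.
Variables (R : realType) (T : nat -> finType) (d : cdu T -> cdu T -> R).

Lemma ratio_set0 r : ratio_set d r 0.
Proof.
exists 0%N, finset.set0, finset.set0; split; last by rewrite cards0 mul0n mul0r.
by move=> a b [x]; rewrite /= finset.in_set0.
Qed.

Lemma ratio_set_le1 r : ubound (ratio_set d r) 1.
Proof.
move=> _ [n [A [B [_ ->]]]]; have [->|N0] := posnP #|T n|.
  by rewrite invr0 mulr0 ler01.
by rewrite ler_pdivrMr ?ltr0n ?expn_gt0 ?N0 // mul1r ler_nat leq_mul ?max_card.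
Qed.

Lemma has_sup_ratio_set r : has_sup (ratio_set d r).
Proof. by split; [exists 0; exact: ratio_set0 | exists 1; exact: ratio_set_le1]. Qed.

Lemma sup_ratio_set_ge0 r : 0 <= sup (ratio_set d r).
Proof. exact: sup_upper_bound (has_sup_ratio_set r) _ (ratio_set0 r). Qed.

Lemma ratio_set_fiber (A B : set (cdu T)) r n : dist_ge d A B r ->
  ratio_set d r ((#|fiber_set A n| * #|fiber_set B n|)%:R / (#|T n| ^ 2)%:R).
Proof.
by move=> dAB; exists n, (fiber_set A n), (fiber_set B n); split;
  last by []; apply: dist_geS dAB; exact: lift_fiber_set_sub.
Qed.

Lemma sum_msq_chi_avg_proj (A B : set (cdu T)) (f : cdu T -> R[i]) n :
  \sum_(x : T n) msq (chi A (avg_proj (chi B f)) (inX x)) =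
  #|fiber_set A n|%:R / #|T n|%:R ^+ 2 * msq (\sum_(y in fiber_set B n) f (inX y)).
Proof.
rewrite sum_msq_chi; under eq_bigr do rewrite avg_proj_inX sum_chi msqZ.
by rewrite sumr_const -[LHS]mulr_natl mulrA exprVn.
Qed.

Lemma sum_msq_chi_avg_proj_le (A B : set (cdu T)) r (f : cdu T -> R[i]) n :
  dist_ge d A B r ->
  \sum_(x : T n) msq (chi A (avg_proj (chi B f)) (inX x)) <=
  sup (ratio_set d r) * \sum_(y : T n) msq (f (inX y)).
Proof.
move=> dAB; rewrite sum_msq_chi_avg_proj.
set a := #|fiber_set A n|; set b := #|fiber_set B n|; set N := #|T n|.
set SB := \sum_(y in fiber_set B n) msq (f (inX y)).
have SB_ge0 : 0 <= SB by apply: sumr_ge0 => y _; exact: msq_ge0.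
have SB_le : SB <= \sum_(y : T n) msq (f (inX y)).
  by rewrite [leLHS]big_mkcond; apply: ler_sum => y _; case: ifP; rewrite ?msq_ge0.
have ratio_le : (a * b)%:R / (N ^ 2)%:R <= sup (ratio_set d r).
  exact: sup_upper_bound (has_sup_ratio_set r) _ (ratio_set_fiber n dAB).
apply: le_trans (ler_wpM2l (sup_ratio_set_ge0 r) SB_le).
apply: (@le_trans _ _ (a%:R / N%:R ^+ 2 * (b%:R * SB))).
  by rewrite ler_wpM2l ?mulr_ge0 ?invr_ge0 ?exprn_ge0 // msq_sum_le.
by rewrite mulrA -natrX [_ / _ * _]mulrAC -natrM ler_wpM2r.
Qed.

Lemma opnorm_chi_avg_proj_le (A B : set (cdu T)) r : dist_ge d A B r ->
  (opnorm (fun f => chi A (avg_proj (chi B f))) <=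
   (Num.sqrt (sup (ratio_set d r)))%:E)%E.
Proof.
move=> dAB; apply: ge_ereal_sup => _ [f f_le1 <-].
rewrite /l2norm -[X in (_ <= X)%E]/(sqrte (sup (ratio_set d r))%:E).
rewrite lee_sqrt ?lee_fin ?sup_ratio_set_ge0 //.
have msq_ge0E (h : cdu T -> R[i]) x : (0 <= (msq (h x))%:E)%E.
  by rewrite lee_fin msq_ge0.
have fiber_ge0 (h : cdu T -> R[i]) n : (0 <= \sum_(y : T n) (msq (h (inX y)))%:E)%E.
  by rewrite sume_ge0.
have sqrte1 : sqrte 1%E = 1%E :> \bar R by rewrite /= sqrtr1.
move: f_le1; rewrite /= /l2norm -[X in (_ <= X)%E]sqrte1 lee_sqrt //.
rewrite !esum_cdu // -!nneseries_esumT // => f_le1.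
set s := sup (ratio_set d r).
apply: (@le_trans _ _ (s%:E * \sum_(n <oo) \sum_(y : T n) (msq (f (inX y)))%:E)%E).
  rewrite -nneseriesZl //; apply: lee_nneseries => [n _ _|n _]; first exact: fiber_ge0.
  by rewrite !sumEFin -EFinM lee_fin sum_msq_chi_avg_proj_le.
by rewrite -[X in (_ <= X)%E]mule1 lee_wpmul2l // lee_fin sup_ratio_set_ge0.
Qed.

Lemma sqrt_ratio_le_opnorm n (A B : {set T n}) :
  ((Num.sqrt ((#|A| * #|B|)%:R / (#|T n| ^ 2)%:R))%:E <=
   opnorm (fun f : cdu T -> R[i] =>
     chi (lift_set A) (avg_proj (chi (lift_set B) f))))%E.
Proof.
pose c := (Num.sqrt (#|B|%:R : R))^-1.
have c2 : c ^+ 2 = #|B|%:R^-1 by rewrite exprVn sqr_sqrtr ?ler0n.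
(* When [B] is empty, [c] is the junk value [0^-1 = 0] and [c2B] still holds. *)
have c2B : c ^+ 2 * #|B|%:R ^+ 2 = #|B|%:R.
  rewrite c2; have [->|B0] := eqVneq (#|B|%:R : R) 0; first by rewrite invr0 mul0r.
  by rewrite expr2 mulKf.
pose u := chi (lift_set B) (fun=> c%:C).
have u_le1 : (l2norm u <= 1)%E.
  rewrite l2norm_chi_lift_set sum_msq_chi lift_setK msq_real sumr_const /=.
  rewrite -mulr_natr c2 lee_fin -[leRHS]sqrtr1 ler_sqrt ?ler01 //.
  by have [->|B0] := eqVneq (#|B|%:R : R) 0; rewrite ?mulr0 ?ler01 // mulVf.
have sum_u : \sum_(y in B) u (inX y) = (c *+ #|B|)%:C.
  rewrite (eq_bigr (fun=> c%:C)) ?sumr_const ?rmorphMn // => y By.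
  by rewrite /u chi_inX lift_setK By.
have Tu : l2norm (chi (lift_set A) (avg_proj (chi (lift_set B) u))) =
          (Num.sqrt ((#|A| * #|B|)%:R / (#|T n| ^ 2)%:R))%:E.
  rewrite l2norm_chi_lift_set sum_msq_chi_avg_proj !lift_setK sum_u msq_real /=.
  by rewrite -[c *+ _]mulr_natr exprMn c2B natrM natrX mulrAC.
by rewrite -Tu; apply: ereal_sup_ubound; exists u.
Qed.

Lemma has_propagation_avg_projP r eps : 0 <= eps ->
  has_propagation d (@avg_proj R T) r eps <-> sup (ratio_set d r) <= eps ^+ 2.
Proof.
move=> eps0; split=> [prop | sup_le A B dAB].
- apply: ge_sup => [|_ [n [A [B [dAB ->]]]]]; first by exists 0; exact: ratio_set0.
  have := le_trans (sqrt_ratio_le_opnorm A B) (prop _ _ dAB).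
  by rewrite lee_fin ler_sqrt_sqr.
- apply: le_trans (opnorm_chi_avg_proj_le dAB) _.
  by rewrite lee_fin ler_sqrt_sqr.
Qed.

End AveragingProjection.

Theorem proposition3p8 (R : realType) (T : nat -> finType)
  (d : cdu T -> cdu T -> R) :
  coarse_disjoint_union d -> card_to_infty T ->
  (quasi_local d (@avg_proj R T) <->
   sup (ratio_set d r) @[r --> +oo] --> (0 : R)).
Proof.
move=> _ _; have norm_sup r : `|sup (ratio_set d r)| = sup (ratio_set d r).
  exact/ger0_norm/sup_ratio_set_ge0.
split=> [QL | /cvgr0Pnorm_lt sup_cvg0 eps eps0].
- apply/cvgr0Pnorm_lt => e e0.
  have e2_gt0 : 0 < Num.sqrt (e / 2) by rewrite sqrtr_gt0 divr_gt0.
  have [r [_ prop]] := QL _ e2_gt0.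
  apply: filterS (nbhs_pinfty_ge (num_real r)) => t rt.
  have : sup (ratio_set d t) <= Num.sqrt (e / 2) ^+ 2.
    exact/(has_propagation_avg_projP d t (ltW e2_gt0))/(has_propagation_le rt prop).
  rewrite norm_sup sqr_sqrtr ?divr_ge0 ?(ltW e0) // => /le_lt_trans; apply.
  by rewrite ltr_pdivrMr // ltr_pMr // ltr1n.
- have [r r0 sup_lt] := pinfty_ex_gt0 (sup_cvg0 _ (exprn_gt0 2 eps0)).
  exists r; split => //; apply/(has_propagation_avg_projP d r (ltW eps0)).
  by rewrite -norm_sup ltW.
Qed.
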